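(* Let $n,m\ge 1$ and $V(n,m)=\{1,\dots,n\}\times\{1,\dots,m\}$. The minimum number of segments of a geometric tree (whether or not it is required to be noncrossing) covering $V(n,m)$ is $\min(n,m)$ if $n=1$ or $m=1$ or $n=m=2$, and $\min(n,m)+1$ otherwise.
   Context: A geometric tree is a finite abstract tree with at least one edge whose vertices are distinct points of the plane and whose edges are drawn as closed straight-line segments between their endpoints; it covers $P$ if $P$ is contained in the union of its edges; it is noncrossing if any two edges intersect only in a common endpoint. The number of segments of a geometric tree is the minimum number of closed straight-line segments whose union equals the union of the edges of the tree. *)

From Stdlib Require Import Reals List Relations.
Import ListNotations.
Open Scope R_scope.

Definition point : Type := (R * R)%type.

Definition on_seg (s : point * point) (x : point) : Prop :=
  exists t : R, 0 <= t <= 1 /\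
    x = (fst (fst s) + t * (fst (snd s) - fst (fst s)),
         snd (fst s) + t * (snd (snd s) - snd (fst s))).

Record ggraph := GGraph { gverts : list point; gedges : list (point * point) }.

Definition gadj (T : ggraph) (p q : point) : Prop :=
  In (p, q) (gedges T) \/ In (q, p) (gedges T).

Definition is_geom_tree (T : ggraph) : Prop :=
  NoDup (gverts T) /\
  gedges T <> [] /\
  NoDup (gedges T) /\
  (forall e, In e (gedges T) ->
     In (fst e) (gverts T) /\ In (snd e) (gverts T) /\ fst e <> snd e) /\
  (forall p q, In (p, q) (gedges T) -> ~ In (q, p) (gedges T)) /\
  (forall p q, In p (gverts T) -> In q (gverts T) ->
     clos_refl_trans point (gadj T) p q) /\
  length (gedges T) = (length (gverts T) - 1)%nat.

Definition on_edges (T : ggraph) (x : point) : Prop :=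
  exists e, In e (gedges T) /\ on_seg e x.

Definition covers (T : ggraph) (P : point -> Prop) : Prop :=
  forall x, P x -> on_edges T x.

Definition noncrossing (T : ggraph) : Prop :=
  forall e1 e2, In e1 (gedges T) -> In e2 (gedges T) -> e1 <> e2 ->
    forall x, on_seg e1 x -> on_seg e2 x ->
      (x = fst e1 \/ x = snd e1) /\ (x = fst e2 \/ x = snd e2).

Definition is_minimum (P : nat -> Prop) (k : nat) : Prop :=
  P k /\ forall j, P j -> (k <= j)%nat.

Definition seg_cover (T : ggraph) (k : nat) : Prop :=
  exists L : list (point * point), length L = k /\
    (forall s, In s L -> fst s <> snd s) /\
    (forall x, (exists s, In s L /\ on_seg s x) <-> on_edges T x).

Definition num_segments (T : ggraph) (k : nat) : Prop :=
  is_minimum (seg_cover T) k.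

Definition grid (n m : nat) (x : point) : Prop :=
  exists i j : nat, (1 <= i <= n)%nat /\ (1 <= j <= m)%nat /\
    x = (INR i, INR j).

Definition admissible (nc : bool) (n m : nat) (T : ggraph) : Prop :=
  is_geom_tree T /\ covers T (grid n m) /\ (nc = true -> noncrossing T).

Definition expected (n m : nat) : nat :=
  if ((n =? 1) || (m =? 1) || ((n =? 2) && (m =? 2)))%bool
  then Nat.min n m else (Nat.min n m + 1)%nat.

(* Let L be segments whose union is the union of the edges of a
   tree covering V(n,m).  A segment not contained in a line meets it at most
   once, so by the pigeonhole principle the lattice points of a column (row)
   containing no segment of L need distinct segments.  If every column
   contains a segment of L and |L| = n, all segments are vertical, every edge
   is then vertical, and connectedness confines the tree to one column, so
   n = 1; likewise for rows.  Otherwise some column and some row contain no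
   segment, whence |L| >= max(n,m); equality with |L| <= min(n,m) forces
   n = m, and for n >= 3 every segment would cross every column at a lattice
   point, which the segment through (2,1) cannot do.

   A comb (teeth along the longer side, joined by a spine) is a
   noncrossing tree made of min(n,m) + 1 segments (one if there is a single
   tooth); for the 2 x 2 grid the two diagonals, cut at the centre, suffice. *)

From Stdlib Require Import Reals List Relations Lra Lia Psatz Classical.
Import ListNotations.
Open Scope R_scope.

(* Every
   statement phrased with [b] thus holds for columns and rows alike. *)
Definition coord (b : bool) (x : point) : R := if b then fst x else snd x.
Definition mk (b : bool) (u v : R) : point := if b then (u, v) else (v, u).

Lemma coord_mk (b : bool) (u v : R) : coord b (mk b u v) = u.
Proof. destruct b; reflexivity. Qed.

Lemma mk_inj (b : bool) (u v u' v' : R) : mk b u v = mk b u' v' -> u = u' /\ v = v'.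
Proof. destruct b; simpl; intro H; injection H; auto. Qed.

Definition segpt (e : point * point) (t : R) : point :=
  (fst (fst e) + t * (fst (snd e) - fst (fst e)),
   snd (fst e) + t * (snd (snd e) - snd (fst e))).

Lemma coord_segpt (b : bool) (e : point * point) (t : R) :
  coord b (segpt e t) = coord b (fst e) + t * (coord b (snd e) - coord b (fst e)).
Proof. destruct b; reflexivity. Qed.

Lemma segpt0 (e : point * point) : segpt e 0 = fst e.
Proof. destruct e as [[a b] [c d]]; unfold segpt; simpl; f_equal; ring. Qed.

Lemma segpt1 (e : point * point) : segpt e 1 = snd e.
Proof. destruct e as [[a b] [c d]]; unfold segpt; simpl; f_equal; ring. Qed.

Lemma on_seg_mk (b : bool) (u1 v1 u2 v2 : R) (x : point) :
  on_seg (mk b u1 v1, mk b u2 v2) x <->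
  exists t, 0 <= t <= 1 /\ x = mk b (u1 + t * (u2 - u1)) (v1 + t * (v2 - v1)).
Proof. destruct b; unfold on_seg; simpl; tauto. Qed.

Lemma seg_meets_line_once (b : bool) (c : R) (s : point * point) (x y : point) :
  ~ (coord b (fst s) = c /\ coord b (snd s) = c) ->
  on_seg s x -> on_seg s y -> coord b x = c -> coord b y = c -> x = y.
Proof.
  intros Hn [t1 [_ ->]] [t2 [_ ->]]. fold (segpt s t1) (segpt s t2).
  rewrite !coord_segpt. intros E1 E2.
  assert (Hd : coord b (snd s) - coord b (fst s) <> 0).
  { intro Hd. apply Hn. rewrite Hd in E1. split; lra. }
  assert (Ht : (t1 - t2) * (coord b (snd s) - coord b (fst s)) = 0) by lra.
  apply Rmult_integral in Ht as [Ht|Ht]; [|contradiction].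
  replace t2 with t1 by lra. reflexivity.
Qed.

Lemma seg_coord_const (b : bool) (s : point * point) (x : point) :
  coord b (fst s) = coord b (snd s) -> on_seg s x -> coord b x = coord b (fst s).
Proof.
  intros Heq [t [_ ->]]. fold (segpt s t). rewrite coord_segpt, <- Heq. ring.
Qed.

Lemma meets_line_not_parallel (b : bool) (c : R) (s : point * point) (x : point) :
  on_seg s x -> coord b x = c -> ~ (coord b (fst s) = c /\ coord b (snd s) = c) ->
  coord b (fst s) <> coord b (snd s).
Proof.
  intros Hx Hc Hn Heq. apply Hn.
  pose proof (seg_coord_const b s x Heq Hx). split; congruence.
Qed.

Lemma pigeonhole {A B : Type} (decB : forall x y : B, {x = y} + {x <> y})
  (Rl : A -> B -> Prop) (P : list A) :
  NoDup P -> forall L : list B, (forall p, In p P -> exists b, In b L /\ Rl p b) ->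
  (forall b p1 p2, In b L -> In p1 P -> In p2 P -> Rl p1 b -> Rl p2 b -> p1 = p2) ->
  (length P <= length L)%nat.
Proof.
  induction 1 as [|p P Hp HND IH]; intros L Hc Hi; simpl; [lia|].
  destruct (Hc p (or_introl eq_refl)) as [b [Hb Rb]].
  pose proof (remove_length_lt decB L b Hb).
  enough (length P <= length (remove decB b L))%nat by lia.
  apply IH.
  - intros p' Hp'. destruct (Hc p' (or_intror Hp')) as [b' [Hb' Rb']].
    exists b'; split; auto. apply in_in_remove; auto. intros ->.
    apply Hp. rewrite <- (Hi b p' p); simpl; auto.
  - intros b0 p1 p2 Hb0. apply in_remove in Hb0 as [Hb0 _].
    intros; apply (Hi b0); simpl; auto.
Qed.

Lemma pigeonhole_tight {A B : Type} (decB : forall x y : B, {x = y} + {x <> y})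
  (Rl : A -> B -> Prop) (P : list A) (L : list B) :
  NoDup P -> (forall p, In p P -> exists b, In b L /\ Rl p b) ->
  (forall b p1 p2, In b L -> In p1 P -> In p2 P -> Rl p1 b -> Rl p2 b -> p1 = p2) ->
  (length L <= length P)%nat ->
  forall b0, In b0 L -> exists p, In p P /\ Rl p b0.
Proof.
  intros HND Hc Hi Hlen b0 Hb0. apply NNPP; intro Hno.
  pose proof (remove_length_lt decB L b0 Hb0).
  enough (length P <= length (remove decB b0 L))%nat by lia.
  apply pigeonhole with Rl; auto.
  - intros p Hp. destruct (Hc p Hp) as [b [Hb Rb]]. exists b. split; auto.
    apply in_in_remove; auto. intros ->. apply Hno; eauto.
  - intros b p1 p2 Hb. apply in_remove in Hb as [Hb _]. intros; apply (Hi b); auto.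
Qed.

Definition seg_eq_dec : forall x y : point * point, {x = y} + {x <> y}.
Proof.
  intros [[a b] [c d]] [[a' b'] [c' d']].
  destruct (Req_EM_T a a'), (Req_EM_T b b'), (Req_EM_T c c'), (Req_EM_T d d'); subst;
    try (left; reflexivity); right; congruence.
Defined.

Definition cov (L : list (point * point)) (x : point) : Prop :=
  exists s, In s L /\ on_seg s x.

Definition gridline (b : bool) (c : R) (K : nat) : list point :=
  map (fun j => mk b c (INR j)) (seq 1 K).

Lemma in_gridline (b : bool) (c : R) (K : nat) (x : point) :
  In x (gridline b c K) <-> exists j, (1 <= j <= K)%nat /\ x = mk b c (INR j).
Proof.
  unfold gridline; rewrite in_map_iff; split.
  - intros [j [<- Hj]]; apply in_seq in Hj; exists j; split; auto; lia.
  - intros [j [Hj ->]]; exists j; split; auto; apply in_seq; lia.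
Qed.

Lemma NoDup_gridline (b : bool) (c : R) (K : nat) : NoDup (gridline b c K).
Proof.
  apply NoDup_map_NoDup_ForallPairs; [|apply seq_NoDup].
  intros j j' _ _ E. apply mk_inj in E as [_ E]. apply INR_eq, E.
Qed.

Lemma gridline_count (b : bool) (c : R) (K : nat) (L : list (point * point)) :
  (forall j, (1 <= j <= K)%nat -> cov L (mk b c (INR j))) ->
  (forall s, In s L -> ~ (coord b (fst s) = c /\ coord b (snd s) = c)) ->
  (K <= length L)%nat /\
  ((length L <= K)%nat -> forall s, In s L ->
     exists j, (1 <= j <= K)%nat /\ on_seg s (mk b c (INR j))).
Proof.
  intros Hcov Hn.
  assert (Hlen : length (gridline b c K) = K)
    by (unfold gridline; rewrite length_map, length_seq; reflexivity).
  assert (Hc : forall x, In x (gridline b c K) -> exists s, In s L /\ on_seg s x).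
  { intros x Hx. apply in_gridline in Hx as [j [Hj ->]]. apply Hcov, Hj. }
  assert (Hi : forall s x y, In s L -> In x (gridline b c K) -> In y (gridline b c K) ->
            on_seg s x -> on_seg s y -> x = y).
  { intros s x y Hs Hx Hy Ox Oy. apply in_gridline in Hx as [i [_ ->]].
    apply in_gridline in Hy as [j [_ ->]].
    apply (seg_meets_line_once b c s); auto; apply coord_mk. }
  split.
  - rewrite <- Hlen. apply (pigeonhole seg_eq_dec (fun x s => on_seg s x)); auto.
    apply NoDup_gridline.
  - intros Hl s Hs. rewrite <- Hlen in Hl.
    destruct (pigeonhole_tight seg_eq_dec (fun x s => on_seg s x) _ L
                (NoDup_gridline b c K) Hc Hi Hl s Hs) as [x [Hx Hxs]].
    apply in_gridline in Hx as [j [Hj ->]]. exists j; auto.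
Qed.

Definition par (b : bool) (i : nat) (s : point * point) : Prop :=
  coord b (fst s) = INR i /\ coord b (snd s) = INR i.

Lemma parallel_count (b : bool) (K : nat) (L : list (point * point)) :
  (forall i, (1 <= i <= K)%nat -> exists s, In s L /\ par b i s) ->
  (K <= length L)%nat /\
  ((length L <= K)%nat -> forall s, In s L -> exists i, par b i s).
Proof.
  intros Hc.
  assert (Hc' : forall i, In i (seq 1 K) -> exists s, In s L /\ par b i s).
  { intros i Hi. apply in_seq in Hi. apply Hc. lia. }
  assert (Hi : forall s i1 i2, In s L -> In i1 (seq 1 K) -> In i2 (seq 1 K) ->
            par b i1 s -> par b i2 s -> i1 = i2).
  { intros s i1 i2 _ _ _ [E1 _] [E2 _]. apply INR_eq. congruence. }
  pose proof (pigeonhole seg_eq_dec (par b) (seq 1 K) (seq_NoDup K 1) L Hc' Hi) as H1.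
  rewrite length_seq in H1. split; auto.
  intros Hl s Hs.
  destruct (pigeonhole_tight seg_eq_dec (par b) (seq 1 K) L (seq_NoDup K 1) Hc' Hi)
    with s as [i [_ Hp]]; auto.
  - rewrite length_seq; auto.
  - exists i; auto.
Qed.

Lemma half_not_nat (i j : nat) : INR j <> INR i + / 2.
Proof.
  intro H.
  assert (INR (2 * j) = INR (2 * i + 1)) by (rewrite mult_INR, plus_INR, mult_INR; simpl; lra).
  apply INR_eq in H0. lia.
Qed.

(* A segment all of whose points have a natural-number [b]-coordinate has
   equal [b]-coordinates at its ends: otherwise the point at distance 1/2 from
   an end in that coordinate would be a half-integer. *)
Lemma integral_coord_endpoints (b : bool) (e : point * point) :
  (forall t, 0 <= t <= 1 -> exists k : nat, coord b (segpt e t) = INR k) ->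
  coord b (fst e) = coord b (snd e).
Proof.
  intros Hint.
  destruct (Hint 0) as [i Hi]; [lra|]. destruct (Hint 1) as [k Hk]; [lra|].
  rewrite segpt0 in Hi. rewrite segpt1 in Hk. rewrite Hi, Hk.
  destruct (Nat.eq_dec i k) as [->|Hik]; [reflexivity|exfalso].
  set (d := INR k - INR i).
  assert (Hd : 1 <= Rabs d).
  { apply Nat.lt_gt_cases in Hik as [Hlt|Hlt].
    - assert (INR (S i) <= INR k) by (apply le_INR; lia). rewrite S_INR in H.
      rewrite Rabs_right; unfold d; lra.
    - assert (INR (S k) <= INR i) by (apply le_INR; lia). rewrite S_INR in H.
      rewrite Rabs_left; unfold d; lra. }
  set (t := / (2 * Rabs d)).
  assert (Ht : 0 <= t <= 1).
  { assert (0 < t) by (apply Rinv_0_lt_compat; lra).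
    assert (t * (2 * Rabs d) = 1) by (unfold t; field; lra). split; nra. }
  destruct (Hint t Ht) as [j Hj]. rewrite coord_segpt, Hi, Hk in Hj. fold d in Hj.
  destruct (Rcase_abs d) as [Hneg|Hpos].
  - assert (t * d = - / 2) by (unfold t; rewrite Rabs_left by lra; field; lra).
    apply (half_not_nat j i). lra.
  - assert (t * d = / 2) by (unfold t; rewrite Rabs_right in * by lra; field; lra).
    apply (half_not_nat i j). lra.
Qed.

(* If a segment cover of a tree consists of segments lying in lattice lines
   [coord b = i], the whole tree lies in a single such line: each edge does,
   and the tree is connected. *)
Lemma parallel_cover_one_line (b : bool) (T : ggraph) (L : list (point * point)) :
  is_geom_tree T -> (forall x, cov L x <-> on_edges T x) ->
  (forall s, In s L -> exists i : nat, par b i s) ->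
  forall x y, on_edges T x -> on_edges T y -> coord b x = coord b y.
Proof.
  intros HT HL Hpar.
  destruct HT as [_ [_ [_ [Hev [_ [Hconn _]]]]]].
  assert (Hint : forall x, on_edges T x -> exists i : nat, coord b x = INR i).
  { intros x Hx. apply HL in Hx as [s [Hs Hxs]]. destruct (Hpar s Hs) as [i [E1 E2]].
    exists i. rewrite <- E1. apply seg_coord_const; [congruence|exact Hxs]. }
  assert (Hedge : forall e, In e (gedges T) -> coord b (fst e) = coord b (snd e)).
  { intros e He. apply integral_coord_endpoints. intros t Ht. apply Hint.
    exists e; split; [auto|exists t; auto]. }
  assert (Hpath : forall p q, clos_refl_trans point (gadj T) p q -> coord b p = coord b q).
  { induction 1 as [p q [H|H]| |].
    - apply (Hedge _ H).
    - symmetry; apply (Hedge _ H).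
    - reflexivity.
    - congruence. }
  assert (Hfst : forall x, on_edges T x ->
            exists e, In e (gedges T) /\ coord b x = coord b (fst e)).
  { intros x [e [He Hxe]]. exists e; split; auto.
    apply seg_coord_const; auto. }
  intros x y Hx Hy.
  destruct (Hfst x Hx) as [e1 [He1 ->]]. destruct (Hfst y Hy) as [e2 [He2 ->]].
  apply Hpath, Hconn; apply Hev; auto.
Qed.

(* First case of the lower bound: if each lattice line [coord b = i],
   [1 <= i <= K] with [K >= 2], contains a segment of the cover of a tree
   through [mk b 1 1] and [mk b 2 1], the cover has more than [K] segments,
   since [K] of them would confine the tree to one line. *)
Lemma parallel_lines_lower_bound (b : bool) (K : nat) (T : ggraph)
  (L : list (point * point)) :
  (2 <= K)%nat -> is_geom_tree T -> (forall x, cov L x <-> on_edges T x) ->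
  on_edges T (mk b (INR 1) (INR 1)) -> on_edges T (mk b (INR 2) (INR 1)) ->
  (forall i, (1 <= i <= K)%nat -> exists s, In s L /\ par b i s) ->
  (K < length L)%nat.
Proof.
  intros HK HT HL H1 H2 Hc. destruct (parallel_count b K L Hc) as [Hle Htight].
  destruct (Nat.eq_dec (length L) K) as [HLK|]; [exfalso|lia].
  pose proof (parallel_cover_one_line b T L HT HL (Htight ltac:(lia)) _ _ H1 H2) as E.
  rewrite !coord_mk in E. apply INR_eq in E. discriminate.
Qed.

(* A segment through (1,a) and (2,1) with a >= 2 has slope at most -1, so it
   cannot reach a point (N,b) with N >= 3 and b >= 1. *)
Lemma steep_segment_contra (s : point * point) (a b N : R) :
  on_seg s (1, a) -> on_seg s (2, 1) -> on_seg s (N, b) ->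
  2 <= a -> 1 <= b -> 3 <= N -> False.
Proof.
  destruct s as [[px py] [qx qy]]; intros [t1 [_ E1]] [t2 [_ E2]] [t3 [_ E3]].
  simpl in *. injection E1 as E1 F1. injection E2 as E2 F2. injection E3 as E3 F3.
  intros Ha Hb HN.
  assert (A1 : (t2 - t1) * (qx - px) = 1) by lra.
  assert (A2 : (t3 - t2) * (qx - px) = N - 2) by lra.
  assert (A3 : (t2 - t1) * (qy - py) = 1 - a) by lra.
  assert (A4 : (t3 - t2) * (qy - py) = b - 1) by lra.
  assert (B : ((t3 - t2) * (qy - py)) * ((t2 - t1) * (qx - px)) =
              ((t3 - t2) * (qx - px)) * ((t2 - t1) * (qy - py))) by ring.
  rewrite A1, A2, A3, A4 in B. nra.
Qed.

(* An N x N grid, N >= 3, cannot be covered by N segments none of which is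
   vertical or horizontal: each segment would meet every column in a lattice
   point, and the one through (2,1), meeting column 1 above row 1, would be
   too steep to meet column N inside the grid. *)
Lemma tight_square_impossible (N : nat) (L : list (point * point)) :
  (3 <= N)%nat -> length L = N ->
  (forall i j, (1 <= i <= N)%nat -> (1 <= j <= N)%nat -> cov L (INR i, INR j)) ->
  (forall s, In s L -> coord true (fst s) <> coord true (snd s)) ->
  (forall s, In s L -> coord false (fst s) <> coord false (snd s)) ->
  False.
Proof.
  intros HN HL Hg Hnv Hnh.
  assert (Hcol : forall i, (1 <= i <= N)%nat -> forall s, In s L ->
            exists j, (1 <= j <= N)%nat /\ on_seg s (INR i, INR j)).
  { intros i Hi. destruct (gridline_count true (INR i) N L) as [_ Htight].
    - intros j Hj. apply Hg; auto.
    - intros s Hs [E1 E2]. apply (Hnv s Hs). congruence.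
    - exact (Htight ltac:(lia)). }
  destruct (Hg 2%nat 1%nat ltac:(lia) ltac:(lia)) as [s [Hs Hs21]].
  destruct (Hcol 1%nat ltac:(lia) s Hs) as [a [Ha Hsa]].
  destruct (Hcol N ltac:(lia) s Hs) as [b [Hb Hsb]].
  assert (Ha1 : a <> 1%nat).
  { intros ->. assert (E : (INR 1, INR 1) = (INR 2, INR 1)).
    { apply (seg_meets_line_once false (INR 1) s); auto.
      intros [E1 E2]. apply (Hnh s Hs). congruence. }
    injection E as E. simpl in E. lra. }
  replace (INR 2) with 2 in Hs21 by (simpl; ring).
  apply (steep_segment_contra s (INR a) (INR b) (INR N)); auto.
  - assert (INR 2 <= INR a) by (apply le_INR; lia). simpl in *; lra.
  - assert (INR 1 <= INR b) by (apply le_INR; lia). simpl in *; lra.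
  - assert (INR 3 <= INR N) by (apply le_INR; lia). simpl in *; lra.
Qed.

Lemma expected_le (n m : nat) : (expected n m <= Nat.min n m + 1)%nat.
Proof. unfold expected; destruct (_ || _)%bool; lia. Qed.

Lemma expected_1l (m : nat) : (1 <= m)%nat -> expected 1 m = 1%nat.
Proof. intros; unfold expected; simpl; destruct m; simpl; lia. Qed.

Lemma expected_1r (n : nat) : (1 <= n)%nat -> expected n 1 = 1%nat.
Proof. intros; unfold expected; destruct (Nat.eqb n 1); simpl; lia. Qed.

Lemma expected_small (n : nat) : (1 <= n <= 2)%nat -> expected n n = n.
Proof. intros; unfold expected. destruct n as [|[|[|]]]; simpl; lia. Qed.

Lemma expected_generic (n m : nat) : (2 <= n)%nat -> (2 <= m)%nat ->
  ~ (n = 2 /\ m = 2)%nat -> expected n m = (Nat.min n m + 1)%nat.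
Proof.
  intros; unfold expected.
  destruct (Nat.eqb_spec n 1), (Nat.eqb_spec m 1), (Nat.eqb_spec n 2), (Nat.eqb_spec m 2);
    simpl; lia.
Qed.

(* Second case of the lower bound: if some column [i0] and some row [j0] of
   the grid contain no segment of the cover, each of their lattice points needs
   its own segment; a cover with fewer than [min n m + 1] segments forces a
   square grid covered tightly by non-vertical, non-horizontal segments. *)
Lemma transversal_lower_bound (n m i0 j0 : nat) (L : list (point * point)) :
  (1 <= i0 <= n)%nat -> (1 <= j0 <= m)%nat ->
  (forall i j, (1 <= i <= n)%nat -> (1 <= j <= m)%nat -> cov L (INR i, INR j)) ->
  (forall s, In s L -> ~ par true i0 s) -> (forall s, In s L -> ~ par false j0 s) ->
  (expected n m <= length L)%nat.
Proof.
  intros Hi0 Hj0 Hg Hni0 Hnj0.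
  destruct (gridline_count true (INR i0) m L) as [Hm Hmt]; [intros j Hj; apply Hg; auto|exact Hni0|].
  destruct (gridline_count false (INR j0) n L) as [Hn Hnt]; [intros i Hi; apply Hg; auto|exact Hnj0|].
  pose proof (expected_le n m).
  destruct (Compare_dec.le_lt_dec (Nat.min n m + 1) (length L)); [lia|].
  assert (n = m /\ length L = n) as [<- HLn] by lia.
  destruct (Compare_dec.le_lt_dec n 2). { rewrite expected_small; lia. }
  exfalso. apply (tight_square_impossible n L); auto; intros s Hs.
  - destruct (Hmt ltac:(lia) s Hs) as [j [_ Hx]].
    exact (meets_line_not_parallel true (INR i0) s _ Hx (coord_mk _ _ _) (Hni0 s Hs)).
  - destruct (Hnt ltac:(lia) s Hs) as [i [_ Hx]].
    exact (meets_line_not_parallel false (INR j0) s _ Hx (coord_mk _ _ _) (Hnj0 s Hs)).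
Qed.

(* Either all columns (or all rows) contain a segment
   of the cover, or some column and some row contain none. *)
Lemma segments_lower_bound (n m : nat) (T : ggraph) (L : list (point * point)) :
  (1 <= n)%nat -> (1 <= m)%nat -> is_geom_tree T -> covers T (grid n m) ->
  (forall x, cov L x <-> on_edges T x) -> (expected n m <= length L)%nat.
Proof.
  intros Hn Hm HT Hc HL.
  assert (Hge : forall i j, (1 <= i <= n)%nat -> (1 <= j <= m)%nat -> on_edges T (INR i, INR j))
    by (intros i j Hi Hj; apply Hc; exists i, j; auto).
  pose proof (expected_le n m).
  destruct (classic (forall i, (1 <= i <= n)%nat -> exists s, In s L /\ par true i s)) as [HV|HV].
  { destruct (Nat.eq_dec n 1) as [->|Hn1].
    - rewrite expected_1l by lia. apply (parallel_count true 1 L HV).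
    - enough (n < length L)%nat by lia.
      apply (parallel_lines_lower_bound true n T L); try apply Hge; auto; lia. }
  destruct (classic (forall j, (1 <= j <= m)%nat -> exists s, In s L /\ par false j s)) as [HH|HH].
  { destruct (Nat.eq_dec m 1) as [->|Hm1].
    - rewrite expected_1r by lia. apply (parallel_count false 1 L HH).
    - enough (m < length L)%nat by lia.
      apply (parallel_lines_lower_bound false m T L); try apply Hge; auto; lia. }
  apply not_all_ex_not in HV as [i0 HV]. apply imply_to_and in HV as [Hi0 HV].
  apply not_all_ex_not in HH as [j0 HH]. apply imply_to_and in HH as [Hj0 HH].
  apply (transversal_lower_bound n m i0 j0 L); auto.
  - intros i j Hi Hj. apply HL, Hge; auto.
  - intros s Hs Hp. apply HV. exists s; auto.
  - intros s Hs Hp. apply HH. exists s; auto.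
Qed.

Lemma crt_sym {A : Type} (Rl : A -> A -> Prop) : (forall x y, Rl x y -> Rl y x) ->
  forall x y, clos_refl_trans A Rl x y -> clos_refl_trans A Rl y x.
Proof.
  intros Hs x y H; induction H.
  - apply rt_step; auto.
  - apply rt_refl.
  - eapply rt_trans; eauto.
Qed.

Lemma nat_between (i k : nat) (s : R) : INR i = INR k + s -> 0 <= s <= 1 ->
  (i = k /\ s = 0) \/ (i = S k /\ s = 1).
Proof.
  intros E Hs.
  assert (k <= i)%nat by (apply INR_le; lra).
  assert (i <= S k)%nat by (apply INR_le; rewrite S_INR; lra).
  destruct (Nat.eq_dec i k) as [->|Hne]; [left; split; auto; lra|].
  right. assert (i = S k) by lia. subst. rewrite S_INR in E. split; auto; lra.
Qed.

Lemma unit_interval_containing (K : nat) : (1 <= K)%nat -> forall u, 1 <= u <= INR K + 1 ->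
  exists k, (1 <= k <= K)%nat /\ INR k <= u <= INR k + 1.
Proof.
  induction K as [|K IH]; intros HK u Hu; [lia|].
  destruct (Nat.eq_dec K 0) as [->|HK0].
  - exists 1%nat; simpl in *; split; [lia|lra].
  - destruct (Rle_dec u (INR K + 1)) as [Hle|Hgt].
    + destruct (IH ltac:(lia) u) as [k [Hk Hk2]]; [lra|]. exists k; split; auto; lia.
    + exists (S K); split; [lia|]. rewrite S_INR in *. lra.
Qed.

(* With [b = true] the teeth are the columns of V(K,M). *)
Definition tooth (b : bool) (M i : nat) : point * point :=
  (mk b (INR i) 1, mk b (INR i) (INR M)).
Definition spine_edge (b : bool) (i : nat) : point * point :=
  (mk b (INR i) 1, mk b (INR (S i)) 1).
Definition comb (b : bool) (K M : nat) : ggraph :=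
  GGraph (map (fun i => mk b (INR i) 1) (seq 1 K) ++
          map (fun i => mk b (INR i) (INR M)) (seq 1 K))
         (map (tooth b M) (seq 1 K) ++ map (spine_edge b) (seq 1 (K - 1))).

Definition comb_segments (b : bool) (K M : nat) : list (point * point) :=
  map (tooth b M) (seq 1 K) ++
  (if Nat.eqb K 1 then [] else [(mk b 1 1, mk b (INR K) 1)]).

Section Comb.
Variables (b : bool) (K M : nat).
Hypothesis (HK : (1 <= K)%nat) (HM : (2 <= M)%nat).

Lemma comb_height : 2 <= INR M.
Proof. pose proof (le_INR 2 M HM). simpl in *; lra. Qed.

Lemma in_comb_verts (x : point) : In x (gverts (comb b K M)) <->
  exists i, (1 <= i <= K)%nat /\ (x = mk b (INR i) 1 \/ x = mk b (INR i) (INR M)).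
Proof.
  simpl; rewrite in_app_iff, !in_map_iff; split.
  - intros [[i [<- Hi]]|[i [<- Hi]]]; apply in_seq in Hi; exists i; split; auto; lia.
  - intros [i [Hi [->| ->]]]; [left|right]; exists i; split; auto; apply in_seq; lia.
Qed.

Lemma in_comb_edges (e : point * point) : In e (gedges (comb b K M)) <->
  (exists i, (1 <= i <= K)%nat /\ e = tooth b M i) \/
  (exists i, (1 <= i < K)%nat /\ e = spine_edge b i).
Proof.
  simpl; rewrite in_app_iff, !in_map_iff; split.
  - intros [[i [<- Hi]]|[i [<- Hi]]]; apply in_seq in Hi; [left|right]; exists i; split; auto; lia.
  - intros [[i [Hi ->]]|[i [Hi ->]]]; [left|right]; exists i; split; auto; apply in_seq; lia.
Qed.

Lemma comb_verts_NoDup : NoDup (gverts (comb b K M)).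
Proof.
  pose proof comb_height. simpl. apply NoDup_app.
  - apply NoDup_map_NoDup_ForallPairs; [|apply seq_NoDup].
    intros x y _ _ E. apply mk_inj in E as [E _]. apply INR_eq, E.
  - apply NoDup_map_NoDup_ForallPairs; [|apply seq_NoDup].
    intros x y _ _ E. apply mk_inj in E as [E _]. apply INR_eq, E.
  - intros a H1 H2. apply in_map_iff in H1 as [i [<- _]].
    apply in_map_iff in H2 as [j [E _]]. apply mk_inj in E as [_ E]. lra.
Qed.

Lemma comb_edges_NoDup : NoDup (gedges (comb b K M)).
Proof.
  pose proof comb_height. simpl. apply NoDup_app.
  - apply NoDup_map_NoDup_ForallPairs; [|apply seq_NoDup].
    intros x y _ _ E. injection E as E _. apply mk_inj in E as [E _]. apply INR_eq, E.
  - apply NoDup_map_NoDup_ForallPairs; [|apply seq_NoDup].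
    intros x y _ _ E. injection E as E _. apply mk_inj in E as [E _]. apply INR_eq, E.
  - intros a H1 H2. apply in_map_iff in H1 as [i [<- _]].
    apply in_map_iff in H2 as [j [E _]]. injection E as _ E. apply mk_inj in E as [_ E]. lra.
Qed.

Lemma comb_edge_ends (e : point * point) : In e (gedges (comb b K M)) ->
  In (fst e) (gverts (comb b K M)) /\ In (snd e) (gverts (comb b K M)) /\ fst e <> snd e.
Proof.
  pose proof comb_height. rewrite in_comb_edges, !in_comb_verts.
  intros [[i [Hi ->]]|[i [Hi ->]]]; cbn [fst snd tooth spine_edge].
  - split; [exists i; auto|split; [exists i; auto|]].
    intro E; apply mk_inj in E as [_ E]; lra.
  - split; [exists i; split; [lia|auto]|split; [exists (S i); split; [lia|auto]|]].
    intro E; apply mk_inj in E as [E _]. rewrite S_INR in E. lra.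
Qed.

Lemma comb_no_reversed_edge (p q : point) :
  In (p, q) (gedges (comb b K M)) -> ~ In (q, p) (gedges (comb b K M)).
Proof.
  pose proof comb_height. rewrite !in_comb_edges.
  intros [[i [_ E1]]|[i [_ E1]]] [[j [_ E2]]|[j [_ E2]]];
    unfold tooth, spine_edge in *; rewrite ?S_INR in E1, E2;
    injection E1 as -> ->; injection E2 as E2 E2';
    apply mk_inj in E2 as [? ?]; apply mk_inj in E2' as [? ?]; lra.
Qed.

Lemma comb_connected (p q : point) :
  In p (gverts (comb b K M)) -> In q (gverts (comb b K M)) ->
  clos_refl_trans point (gadj (comb b K M)) p q.
Proof.
  assert (Hfoot : forall i, (1 <= i <= K)%nat ->
            clos_refl_trans point (gadj (comb b K M)) (mk b (INR 1) 1) (mk b (INR i) 1)).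
  { induction i as [|i IH]; intros Hi; [lia|].
    destruct (Nat.eq_dec i 0) as [->|Hi0]; [apply rt_refl|].
    eapply rt_trans; [apply IH; lia|]. apply rt_step. left.
    apply (in_comb_edges (spine_edge b i)). right. exists i; split; auto; lia. }
  assert (Hall : forall v, In v (gverts (comb b K M)) ->
            clos_refl_trans point (gadj (comb b K M)) (mk b (INR 1) 1) v).
  { intros v Hv. apply in_comb_verts in Hv as [i [Hi [->| ->]]]; auto.
    eapply rt_trans; [apply (Hfoot i Hi)|]. apply rt_step. left.
    apply (in_comb_edges (tooth b M i)). left. exists i; auto. }
  intros Hp Hq. eapply rt_trans; [|apply Hall; auto].
  apply crt_sym; [|apply Hall; auto]. intros x y [H|H]; [right|left]; auto.
Qed.

Lemma comb_tree : is_geom_tree (comb b K M).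
Proof.
  split; [apply comb_verts_NoDup|split; [|split; [apply comb_edges_NoDup|
    split; [apply comb_edge_ends|split; [apply comb_no_reversed_edge|
    split; [apply comb_connected|]]]]]].
  - intro E. assert (H : In (tooth b M 1) (gedges (comb b K M))).
    { apply in_comb_edges. left. exists 1%nat; split; [lia|reflexivity]. }
    rewrite E in H; contradiction.
  - simpl. rewrite !length_app, !length_map, !length_seq. lia.
Qed.

Lemma comb_covers_lattice (i j : nat) : (1 <= i <= K)%nat -> (1 <= j <= M)%nat ->
  on_edges (comb b K M) (mk b (INR i) (INR j)).
Proof.
  intros Hi Hj. pose proof comb_height.
  exists (tooth b M i); split; [apply in_comb_edges; left; exists i; auto|].
  unfold tooth; apply on_seg_mk.
  pose proof (le_INR 1 j ltac:(lia)). pose proof (le_INR j M ltac:(lia)). simpl in *.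
  set (t := (INR j - 1) / (INR M - 1)).
  assert (Ht : t * (INR M - 1) = INR j - 1) by (unfold t; field; lra).
  exists t; split; [split; nra|]. f_equal; nra.
Qed.

Lemma tooth_spine_meet (i j : nat) (x : point) :
  on_seg (tooth b M i) x -> on_seg (spine_edge b j) x ->
  (x = fst (tooth b M i) \/ x = snd (tooth b M i)) /\
  (x = fst (spine_edge b j) \/ x = snd (spine_edge b j)).
Proof.
  intros O1 O2. pose proof comb_height.
  unfold tooth, spine_edge in *. rewrite S_INR in *. cbn [fst snd].
  apply on_seg_mk in O1 as [t [Ht ->]]. apply on_seg_mk in O2 as [s [Hs E]].
  apply mk_inj in E as [E1 E2].
  assert (t = 0) by nra. subst t.
  destruct (nat_between i j s ltac:(nra) Hs) as [[-> ->]|[-> ->]].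
  - split; left; f_equal; ring.
  - split; [left|right]; f_equal; rewrite ?S_INR; ring.
Qed.

Lemma comb_noncrossing : noncrossing (comb b K M).
Proof.
  intros e1 e2 H1 H2 Hne x O1 O2. apply in_comb_edges in H1, H2.
  destruct H1 as [[i [Hi ->]]|[i [Hi ->]]]; destruct H2 as [[j [Hj ->]]|[j [Hj ->]]].
  -
    exfalso. unfold tooth in *. apply on_seg_mk in O1 as [t [Ht ->]].
    apply on_seg_mk in O2 as [s [Hs E]]. apply mk_inj in E as [E1 _].
    assert (i = j) by (apply INR_eq; lra). subst; auto.
  - apply tooth_spine_meet; auto.
  - apply and_comm, tooth_spine_meet; auto.
  -
    unfold spine_edge in *. rewrite S_INR in *. cbn [fst snd].
    apply on_seg_mk in O1 as [t [Ht ->]]. apply on_seg_mk in O2 as [s [Hs E]].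
    apply mk_inj in E as [E1 _].
    assert (i <> j) by (intro; subst; apply Hne; rewrite S_INR; reflexivity).
    destruct (Nat.lt_ge_cases i j) as [Hlt|Hge].
    + pose proof (le_INR (S i) j Hlt). rewrite S_INR in *.
      assert (t = 1) by nra. assert (s = 0) by nra. subst.
      split; [right|left]; f_equal; lra.
    + pose proof (le_INR (S j) i ltac:(lia)). rewrite S_INR in *.
      assert (t = 0) by nra. assert (s = 1) by nra. subst.
      split; [left|right]; f_equal; rewrite ?S_INR; lra.
Qed.

Lemma comb_segment_cover : seg_cover (comb b K M) (if Nat.eqb K 1 then 1%nat else S K).
Proof.
  pose proof comb_height.
  exists (comb_segments b K M). split; [|split].
  - unfold comb_segments; rewrite length_app, length_map, length_seq.
    destruct (Nat.eqb_spec K 1); simpl; lia.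
  - intros s Hs. unfold comb_segments in Hs. apply in_app_iff in Hs as [Hs|Hs].
    + apply in_map_iff in Hs as [i [<- _]]. unfold tooth; cbn [fst snd].
      intro E; apply mk_inj in E; lra.
    + destruct (Nat.eqb_spec K 1); [destruct Hs|]. destruct Hs as [<-|[]]. cbn [fst snd].
      intro E; apply mk_inj in E. pose proof (le_INR 2 K ltac:(lia)). simpl in *; lra.
  - intros x; split.
    + intros [s [Hs Hxs]]. unfold comb_segments in Hs. apply in_app_iff in Hs as [Hs|Hs].
      * apply in_map_iff in Hs as [i [<- Hi]]. apply in_seq in Hi.
        exists (tooth b M i); split; auto. apply in_comb_edges; left; exists i; split; auto; lia.
      *
        destruct (Nat.eqb_spec K 1); [destruct Hs|]. destruct Hs as [<-|[]].
        apply on_seg_mk in Hxs as [t [Ht ->]].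
        pose proof (le_INR 2 K ltac:(lia)). simpl in *.
        destruct (unit_interval_containing (K - 1) ltac:(lia) (1 + t * (INR K - 1)))
          as [k [Hk Hk2]].
        { rewrite minus_INR by lia. simpl. nra. }
        exists (spine_edge b k); split.
        { apply in_comb_edges; right; exists k; split; auto; lia. }
        unfold spine_edge. apply on_seg_mk. exists (1 + t * (INR K - 1) - INR k).
        rewrite S_INR. split; [lra|]. f_equal; ring.
    + intros [e [He Hxe]]. apply in_comb_edges in He as [[i [Hi ->]]|[i [Hi ->]]].
      * exists (tooth b M i); split; auto. unfold comb_segments. apply in_app_iff; left.
        apply in_map_iff; exists i; split; auto; apply in_seq; lia.
      *
        destruct (Nat.eqb_spec K 1); [lia|].
        exists (mk b 1 1, mk b (INR K) 1). split.
        { unfold comb_segments. apply in_app_iff; right.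
          destruct (Nat.eqb_spec K 1); [lia|]. left; auto. }
        unfold spine_edge in Hxe. apply on_seg_mk in Hxe as [s [Hs ->]].
        apply on_seg_mk.
        assert (HK2 : INR 2 <= INR K) by (apply le_INR; lia). simpl in HK2.
        assert (Hi1 : INR 1 <= INR i) by (apply le_INR; lia). simpl in Hi1.
        assert (Hi2 : INR (S i) <= INR K) by (apply le_INR; lia). rewrite S_INR in *.
        set (t := (INR i + s - 1) / (INR K - 1)).
        assert (Ht : t * (INR K - 1) = INR i + s - 1) by (unfold t; field; lra).
        exists t. split; [split; nra|]. f_equal; nra.
Qed.

Lemma comb_witness (nc : bool) (n m : nat) :
  (forall x, grid n m x ->
     exists i j, (1 <= i <= K)%nat /\ (1 <= j <= M)%nat /\ x = mk b (INR i) (INR j)) ->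
  admissible nc n m (comb b K M) /\
  seg_cover (comb b K M) (if Nat.eqb K 1 then 1%nat else S K).
Proof.
  intros Hg. split; [|apply comb_segment_cover].
  split; [apply comb_tree|split; [|intros _; apply comb_noncrossing]].
  intros x Hx. destruct (Hg x Hx) as [i [j [Hi [Hj ->]]]]. apply comb_covers_lattice; auto.
Qed.

End Comb.

(* The 2 x 2 grid: the four corners joined to the centre form a noncrossing
   tree whose edges make up just the two diagonals. *)
Definition centre : point := (3/2, 3/2).
Definition star : ggraph :=
  GGraph [centre; (1,1); (2,2); (2,1); (1,2)]
         [((1,1), centre); ((2,2), centre); ((2,1), centre); ((1,2), centre)].
Definition diagonals : list (point * point) := [((1,1),(2,2)); ((2,1),(1,2))].

Ltac point_neq := let H := fresh in intro H; injection H; intros; lra.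

Lemma star_tree : is_geom_tree star.
Proof.
  unfold is_geom_tree, star, centre; simpl.
  split; [|split; [|split; [|split; [|split; [|split]]]]].
  - repeat constructor; simpl; intros H; repeat destruct H as [H|H]; try contradiction;
      injection H; intros; lra.
  - discriminate.
  - repeat constructor; simpl; intros H; repeat destruct H as [H|H]; try contradiction;
      injection H; intros; lra.
  - intros e He; repeat destruct He as [He|He]; try contradiction; subst; simpl;
      (split; [tauto|split; [tauto|point_neq]]).
  - intros p q H1 H2; repeat destruct H1 as [H1|H1]; try contradiction;
      injection H1; intros; subst;
      repeat destruct H2 as [H2|H2]; try contradiction; injection H2; intros; lra.
  -
    assert (Hc : forall v, In v (gverts star) ->
              clos_refl_trans point (gadj star) v centre).
    { intros v Hv; repeat destruct Hv as [Hv|Hv]; try contradiction; subst;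
        try apply rt_refl; apply rt_step; left; simpl; tauto. }
    intros p q Hp Hq. eapply rt_trans; [apply Hc; auto|].
    apply crt_sym; [intros x y [H|H]; [right|left]; auto|]. apply Hc; auto.
  - reflexivity.
Qed.

Lemma star_covers : covers star (grid 2 2).
Proof.
  intros x [i [j [Hi [Hj ->]]]].
  assert (i = 1 \/ i = 2)%nat as [->| ->] by lia; assert (j = 1 \/ j = 2)%nat as [->| ->] by lia;
    simpl; unfold on_edges, star, centre; simpl.
  - exists ((1,1),(3/2,3/2)); split; [tauto|exists 0; split; [lra|f_equal; simpl; lra]].
  - exists ((1,2),(3/2,3/2)); split; [tauto|exists 0; split; [lra|f_equal; simpl; lra]].
  - exists ((2,1),(3/2,3/2)); split; [tauto|exists 0; split; [lra|f_equal; simpl; lra]].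
  - exists ((2,2),(3/2,3/2)); split; [tauto|exists 0; split; [lra|f_equal; simpl; lra]].
Qed.

Lemma star_noncrossing : noncrossing star.
Proof.
  intros e1 e2 H1 H2 Hne x [t [Ht Ex]] [s [Hs Ex']].
  unfold star, centre in H1, H2; simpl in H1, H2.
  repeat destruct H1 as [H1|H1]; try contradiction; subst;
  repeat destruct H2 as [H2|H2]; try contradiction; subst;
  try (exfalso; apply Hne; reflexivity);
  simpl in *; try subst x; injection Ex'; intros;
  assert (t = 1) by lra; subst; split; right; f_equal; lra.
Qed.

Lemma star_segment_cover : seg_cover star 2.
Proof.
  exists diagonals. split; [reflexivity|split].
  - intros s Hs; unfold diagonals in Hs; simpl in Hs; repeat destruct Hs as [Hs|Hs];
      try contradiction; subst; simpl; point_neq.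
  - intros x; split.
    + (* each half of a diagonal is an edge *)
      intros [s [Hs [t [Ht ->]]]]. unfold diagonals in Hs; simpl in Hs.
      repeat destruct Hs as [Hs|Hs]; try contradiction; subst; simpl;
        unfold on_edges, star, centre; simpl.
      * destruct (Rle_dec t (1/2)).
        -- exists ((1,1),(3/2,3/2)); split; [tauto|exists (2*t); split; [lra|f_equal; simpl; lra]].
        -- exists ((2,2),(3/2,3/2)); split; [tauto|exists (2*(1-t)); split; [lra|f_equal; simpl; lra]].
      * destruct (Rle_dec t (1/2)).
        -- exists ((2,1),(3/2,3/2)); split; [tauto|exists (2*t); split; [lra|f_equal; simpl; lra]].
        -- exists ((1,2),(3/2,3/2)); split; [tauto|exists (2*(1-t)); split; [lra|f_equal; simpl; lra]].
    + intros [e [He [t [Ht ->]]]]. unfold star, centre in He; simpl in He.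
      repeat destruct He as [He|He]; try contradiction; subst; simpl; unfold diagonals; simpl.
      * exists ((1,1),(2,2)); split; [tauto|exists (t/2); split; [lra|f_equal; simpl; lra]].
      * exists ((1,1),(2,2)); split; [tauto|exists (1 - t/2); split; [lra|f_equal; simpl; lra]].
      * exists ((2,1),(1,2)); split; [tauto|exists (t/2); split; [lra|f_equal; simpl; lra]].
      * exists ((2,1),(1,2)); split; [tauto|exists (1 - t/2); split; [lra|f_equal; simpl; lra]].
Qed.

(* Upper bound: some admissible tree is covered by [expected n m] segments --
   the star for the 2 x 2 grid, otherwise a comb whose teeth run along the
   longer side of the grid. *)
Lemma construction (nc : bool) (n m : nat) : (1 <= n)%nat -> (1 <= m)%nat ->
  exists T, admissible nc n m T /\ seg_cover T (expected n m).
Proof.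
  intros Hn Hm.
  destruct (classic (n = 2 /\ m = 2)%nat) as [[-> ->]|H22].
  { exists star. split; [|apply star_segment_cover].
    split; [apply star_tree|split; [apply star_covers|intros; apply star_noncrossing]]. }
  assert (Hcols : forall x, grid n m x -> exists i j, (1 <= i <= n)%nat /\
            (1 <= j <= Nat.max m 2)%nat /\ x = mk true (INR i) (INR j))
    by (intros x [i [j [Hi [Hj ->]]]]; exists i, j; repeat split; auto; lia).
  assert (Hrows : forall x, grid n m x -> exists i j, (1 <= i <= m)%nat /\
            (1 <= j <= Nat.max n 2)%nat /\ x = mk false (INR i) (INR j))
    by (intros x [i [j [Hi [Hj ->]]]]; exists j, i; repeat split; auto; lia).
  destruct (Compare_dec.le_lt_dec n m) as [Hnm|Hnm].
  - exists (comb true n (Nat.max m 2)).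
    destruct (comb_witness true n (Nat.max m 2) Hn ltac:(lia) nc n m Hcols) as [Hadm Hseg].
    split; auto. replace (expected n m) with (if Nat.eqb n 1 then 1%nat else S n); auto.
    destruct (Nat.eqb_spec n 1) as [->|]; [rewrite expected_1l; auto|].
    rewrite expected_generic by lia. lia.
  - exists (comb false m (Nat.max n 2)).
    destruct (comb_witness false m (Nat.max n 2) Hm ltac:(lia) nc n m Hrows) as [Hadm Hseg].
    split; auto. replace (expected n m) with (if Nat.eqb m 1 then 1%nat else S m); auto.
    destruct (Nat.eqb_spec m 1) as [->|]; [rewrite expected_1r; auto|].
    rewrite expected_generic by lia. lia.
Qed.

Theorem claim5 : forall (n m : nat), (1 <= n)%nat -> (1 <= m)%nat ->
  forall nc : bool,
    is_minimum (fun k => exists T, admissible nc n m T /\ num_segments T k)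
      (expected n m).
Proof.
  intros n m Hn Hm nc.
  assert (Hlower : forall T k, admissible nc n m T -> seg_cover T k -> (expected n m <= k)%nat).
  { intros T k [HT [Hc _]] [L [<- [_ HL]]]. apply (segments_lower_bound n m T L); auto. }
  split.
  - destruct (construction nc n m Hn Hm) as [T [Hadm Hseg]].
    exists T. split; auto. split; auto.
    intros k Hk. apply (Hlower T k); auto.
  - intros k [T [Hadm [Hseg _]]]. apply (Hlower T k); auto.
Qed.
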